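(* Let $P\subseteq\mathbb{R}^d$ be a $d$-dimensional lattice polytope and let $\operatorname{Pyr}(P)=\operatorname{conv}(P\times\{1\},\{0\})\subseteq\mathbb{R}^d\times\mathbb{R}$ be the lattice pyramid over $P$. Then $$\mu^F(\operatorname{Pyr}(P))=\max\{2,\ \mu^F(P)+1\}.$$
   Context: For a $d$-dimensional rational polytope $P\subseteq\mathbb{R}^d$ and $a\in(\mathbb{Z}^d)^*$ let $h_P(a)=\min_{x\in P}\langle a,x\rangle$. For $s>0$ the Fine adjoint polytope is $P^{F(s)}=\{x\in\mathbb{R}^d : \langle a,x\rangle\ge h_P(a)+s \text{ for all } a\in(\mathbb{Z}^d)^*\setminus\{0\}\}$. The Fine $\mathbb{Q}$-codegree is $\mu^F(P)=(\sup\{s>0 : P^{F(s)}\neq\emptyset\})^{-1}$. A lattice polytope has vertices in $\mathbb{Z}^d$. *)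

From HB Require Import structures.
From mathcomp Require Import all_boot all_order all_algebra.
From mathcomp Require Import classical_sets reals.
Set Implicit Arguments. Unset Strict Implicit. Unset Printing Implicit Defensive.
Import Order.TTheory GRing.Theory Num.Theory.
Local Open Scope ring_scope.
Local Open Scope classical_set_scope.

Section Polytopes.
Variable R : realType.

Definition vec (d : nat) := 'I_d -> R.
Definition ivec (d : nat) := 'I_d -> int.

Definition ivec_to_vec d (v : ivec d) : vec d := fun i => (v i)%:~R.

Definition pairing d (a : ivec d) (x : vec d) : R := \sum_(i < d) (a i)%:~R * x i.

Definition conv d (V : seq (ivec d)) : set (vec d) :=
  [set x | exists w : 'I_(size V) -> R,
     (forall k, 0 <= w k) /\ \sum_k w k = 1 /\
     forall i, x i = \sum_k w k * (ivec_to_vec (nth (fun=> 0) V k) i)].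

(* conv(V) is d-dimensional: its affine hull (that of V) is all of R^d *)
Definition full_dim d (V : seq (ivec d)) : Prop :=
  forall x : vec d, exists w : 'I_(size V) -> R,
     \sum_k w k = 1 /\
     forall i, x i = \sum_k w k * (ivec_to_vec (nth (fun=> 0) V k) i).

(* h_P(a) = min_{x in P} <a,x>  (the min is attained, so it equals the inf) *)
Definition hP d (P : set (vec d)) (a : ivec d) : R :=
  inf [set pairing a x | x in P].

Definition fine_adjoint d (P : set (vec d)) (s : R) : set (vec d) :=
  [set x | forall a : ivec d, (exists i, a i != 0) -> hP P a + s <= pairing a x].

Definition fine_codegree d (P : set (vec d)) : R :=
  (sup [set s | 0 < s /\ fine_adjoint P s !=set0])^-1.

Definition ext_ivec d (v : ivec d) (c : int) : ivec d.+1 :=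
  fun i => match unlift ord_max i with Some j => v j | None => c end.

Definition pyr_vertices d (V : seq (ivec d)) : seq (ivec d.+1) :=
  (fun=> 0) :: map (fun v => ext_ivec v 1) V.

End Polytopes.

(* Write linear functionals on R^(d+1) as (b, c).  The support function of
   Pyr(P) is h(b, c) = min(0, h_P(b) + c): the apex contributes 0 and the
   vertex (v, 1) contributes <b, v> + c.  For a point (y, t) of Pyr(P)^F(s),
   the functionals (0, 1) and (0, -1) force s <= t <= 1 - s, and the integral
   functional (b, -h_P(b)) shows that y / t lies in P^F(s / t), hence in
   P^F(s / (1 - s)).  Conversely, if y lies in P^F(s / (1 - s)) and 2s <= 1,
   then ((1 - s) y, 1 - s) lies in Pyr(P)^F(s); for the functionals (0, c)
   this uses |c| >= 1.  So the admissible levels of Pyr(P) are the s with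
   2s <= 1 such that s / (1 - s) is admissible for P, and their supremum is
   min(1/2, sigma / (1 + sigma)), sigma being the supremum for P; inverting
   gives max(2, 1/sigma + 1).  A full-dimensional P has sigma > 0, witnessed
   by its barycenter. *)

From HB Require Import structures.
From mathcomp Require Import all_boot all_order all_algebra.
From mathcomp Require Import boolp classical_sets reals.
From mathcomp Require Import ring lra.
Set Implicit Arguments. Unset Strict Implicit. Unset Printing Implicit Defensive.
Import Order.TTheory GRing.Theory Num.Theory.
Local Open Scope ring_scope.
Local Open Scope classical_set_scope.

Section FinePyramid.
Variable R : realType.

Definition vertex d (V : seq (ivec d)) (k : nat) : vec R d :=
  ivec_to_vec R (nth (fun=> 0) V k).

Definition ext_vec d (y : vec R d) (t : R) : vec R d.+1 :=
  fun i => match unlift ord_max i with Some j => y j | None => t end.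

Definition init_ivec d (a : ivec d.+1) : ivec d := fun i => a (lift ord_max i).

Definition init_vec d (x : vec R d.+1) : vec R d := fun i => x (lift ord_max i).

Lemma ext_ivec_lift d (v : ivec d) c i : ext_ivec v c (lift ord_max i) = v i.
Proof. by rewrite /ext_ivec liftK. Qed.

Lemma ext_ivec_max d (v : ivec d) c : ext_ivec v c ord_max = c.
Proof. by rewrite /ext_ivec unlift_none. Qed.

Lemma ext_ivecK d (a : ivec d.+1) : ext_ivec (init_ivec a) (a ord_max) = a.
Proof. by apply/funext => i; rewrite /ext_ivec; case: (unliftP ord_max i) => [j ->|->]. Qed.

Lemma ext_vecK d (x : vec R d.+1) : ext_vec (init_vec x) (x ord_max) = x.
Proof. by apply/funext => i; rewrite /ext_vec; case: (unliftP ord_max i) => [j ->|->]. Qed.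

Lemma pairing_ext d (b : ivec d) c (y : vec R d) t :
  pairing (ext_ivec b c) (ext_vec y t) = pairing b y + c%:~R * t.
Proof.
rewrite /pairing big_ord_recr /= ext_ivec_max /ext_vec unlift_none; congr (_ + _).
apply: eq_bigr => i _.
have -> : widen_ord (leqnSn d) i = lift ord_max i by apply: val_inj; exact: esym (lift_max i).
by rewrite ext_ivec_lift liftK.
Qed.

Lemma pairingZ d (b : ivec d) (y : vec R d) t :
  pairing b (fun i => t * y i) = t * pairing b y.
Proof. by rewrite /pairing mulr_sumr; apply: eq_bigr => i _; rewrite mulrCA. Qed.

Lemma pairingNl d (b : ivec d) (x : vec R d) : pairing (fun i => - b i) x = - pairing b x.
Proof. by rewrite /pairing -sumrN; apply: eq_bigr => i _; rewrite rmorphN mulNr. Qed.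

Lemma pairing0l d (x : vec R d) : pairing (fun=> 0) x = 0.
Proof. by rewrite /pairing big1 // => i _; rewrite mul0r. Qed.

Lemma pairing_vertex d (a : ivec d) (V : seq (ivec d)) k :
  pairing a (vertex V k) = (\sum_i a i * nth (fun=> 0) V k i)%:~R.
Proof. by rewrite /pairing rmorph_sum; apply: eq_bigr => i _; rewrite rmorphM. Qed.

Lemma pairing_combination d (a : ivec d) (V : seq (ivec d)) (w : 'I_(size V) -> R) x :
  (forall i, x i = \sum_k w k * vertex V k i) ->
  pairing a x = \sum_k w k * pairing a (vertex V k).
Proof.
move=> xE; rewrite /pairing.
under eq_bigr => i _ do rewrite xE mulr_sumr.
rewrite exchange_big; apply: eq_bigr => k _; rewrite mulr_sumr.
by apply: eq_bigr => i _; rewrite mulrCA.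
Qed.

Lemma vertex_pyrS d (V : seq (ivec d)) k : (k < size V)%N ->
  vertex (pyr_vertices V) k.+1 = ext_vec (vertex V k) 1.
Proof.
move=> lt_k; apply/funext => i; rewrite /vertex /= (nth_map (fun=> 0)) //.
by rewrite /ivec_to_vec /ext_ivec /ext_vec; case: (unlift ord_max i).
Qed.

Lemma ltr_int_addr1 (m n : int) : (m%:~R : R) < n%:~R -> m%:~R + 1 <= (n%:~R : R).
Proof. by rewrite Rint_ler_addr1 ?RintC. Qed.

Lemma min0_le_scale (m u : R) : 0 <= u <= 1 -> Num.min 0 m <= u * m.
Proof. by case: (leP 0 m) => m0 /andP[u0 u1]; [rewrite mulr_ge0 | nra]. Qed.

Lemma sup_sandwich (S : set R) (m : R) : 0 < m ->
  (forall s, 0 < s < m -> S s) -> (forall s, S s -> s <= m) -> sup S = m.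
Proof.
move=> m_gt0 itv_sub ub.
have S_half : S (m / 2) by apply: itv_sub; apply/andP; split; lra.
have hs : has_sup S by split; [exists (m / 2) | exists m].
apply/eqP; rewrite eq_le ge_sup //=; last by exists (m / 2).
rewrite leNgt; apply/negP => lt_sup.
have : S ((sup S + m) / 2).
  have := sup_upper_bound hs S_half => half_le.
  by apply: itv_sub; apply/andP; split; lra.
by move/(sup_upper_bound hs); lra.
Qed.

Section Polytope.
Variables (d : nat) (V : seq (ivec d)).

Lemma vertex_in_conv (k : 'I_(size V)) : conv V (vertex V k).
Proof.
exists (fun j => (j == k)%:R); split; first by move=> j; rewrite ler0n.
split; first by rewrite (bigD1 k) //= eqxx big1 ?addr0 // => j /negbTE ->.
move=> i; rewrite (bigD1 k) //= big1 ?addr0 ?eqxx ?mul1r // => j /negbTE ->.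
by rewrite mul0r.
Qed.

Lemma hP_convE (a : ivec d) (h : R) :
  (exists k : 'I_(size V), pairing a (vertex V k) = h) ->
  (forall k : 'I_(size V), h <= pairing a (vertex V k)) -> hP (conv V) a = h.
Proof.
move=> [k0 hk0] h_le.
have h_lb : lbound [set pairing a x | x in conv V] h.
  move=> _ [x [w [w_ge0 [w_sum1 xE]]] <-]; rewrite (pairing_combination a xE).
  rewrite -[h]mul1r -w_sum1 mulr_suml; apply: ler_sum => k _.
  exact: ler_wpM2l.
apply/eqP; rewrite eq_le lb_le_inf ?andbT //; last first.
  by exists h, (vertex V k0) => //; exact: vertex_in_conv.
by rewrite -hk0; apply: ge_inf; [exists h | exists (vertex V k0); first exact: vertex_in_conv].
Qed.

Hypothesis V_gt0 : (0 < size V)%N.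

Lemma hP_conv_vertex (a : ivec d) :
  exists k : 'I_(size V), hP (conv V) a = pairing a (vertex V k) /\
    forall k' : 'I_(size V), pairing a (vertex V k) <= pairing a (vertex V k').
Proof.
have [k _ k_min] := @arg_minP _ _ _ (Ordinal V_gt0) xpredT (fun k => pairing a (vertex V k)) isT.
have k_le (k' : 'I_(size V)) : pairing a (vertex V k) <= pairing a (vertex V k') by exact: k_min.
by exists k; split => //; apply: hP_convE k_le; exists k.
Qed.

Lemma hP_int (a : ivec d) : exists z : int, hP (conv V) a = z%:~R :> R.
Proof. by have [k [-> _]] := hP_conv_vertex a; rewrite pairing_vertex; eexists. Qed.

Lemma hP0 : hP (conv V) (fun=> 0) = 0 :> R.
Proof. by apply: hP_convE => [|k]; [exists (Ordinal V_gt0) | ]; rewrite pairing0l. Qed.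

End Polytope.

Lemma hP_pyr d (V : seq (ivec d)) (b : ivec d) (c : int) : (0 < size V)%N ->
  hP (conv (pyr_vertices V)) (ext_ivec b c) = Num.min 0 (hP (conv V) b + c%:~R) :> R.
Proof.
move=> V_gt0; have [k [-> k_min]] := hP_conv_vertex V_gt0 b.
have apex : pairing (ext_ivec b c) (vertex (pyr_vertices V) 0) = 0.
  by rewrite /pairing big1 // => i _; rewrite mulr0.
have base (j : 'I_(size V)) :
    pairing (ext_ivec b c) (vertex (pyr_vertices V) j.+1) = pairing b (vertex V j) + c%:~R.
  by rewrite vertex_pyrS // pairing_ext mulr1.
apply: hP_convE.
  case: (leP 0 (pairing b (vertex V k) + c%:~R)) => _; first by exists ord0.
  have lt_k : (k.+1 < size (pyr_vertices V))%N by rewrite /= size_map ltnS.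
  by exists (Ordinal lt_k); rewrite base.
case=> -[|j] lt_j; first by rewrite apex ge_min lexx.
have lt_j' : (j < size V)%N by rewrite /= size_map ltnS in lt_j.
by rewrite (base (Ordinal lt_j')) ge_min lerD2r k_min orbT.
Qed.

Section Adjoint.
Variables (d : nat) (V : seq (ivec d)).
Hypothesis V_gt0 : (0 < size V)%N.

Lemma fine_adjoint_pyr_lift s (y : vec R d) : 0 < s -> 2 * s <= 1 ->
  fine_adjoint (conv V) (s / (1 - s)) y ->
  fine_adjoint (conv (pyr_vertices V)) s (ext_vec (fun i => (1 - s) * y i) (1 - s)).
Proof.
move=> s_gt0 s_le y_adj a; have [b [c ->]] : exists b c, a = ext_ivec b c.
  by exists (init_ivec a), (a ord_max); rewrite ext_ivecK.
move=> a_nz; rewrite hP_pyr // pairing_ext pairingZ.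
have s_lt1 : 0 < 1 - s by lra.
case: (pselect (exists i, b i != 0)) => [b_nz | /forallNP b0].
  have := y_adj b b_nz; set h := hP _ b => y_b.
  have shift : (1 - s) * (h + s / (1 - s)) = (1 - s) * h + s.
    by rewrite mulrDr mulrCA mulfV ?mulr1 // gt_eqF.
  apply: le_trans (_ : (1 - s) * (h + c%:~R) + s <= _).
    by rewrite lerD2r min0_le_scale //; apply/andP; split; lra.
  have := ler_wpM2l (ltW s_lt1) y_b; rewrite shift; lra.
have c_nz : c != 0.
  case: a_nz => i; case: (unliftP ord_max i) => [j ->|->]; last by rewrite ext_ivec_max.
  by rewrite ext_ivec_lift => /b0.
have -> : b = fun=> 0 by apply/funext => i; have /negP/negbNE/eqP := b0 i.
rewrite hP0 // pairing0l !add0r.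
case: (ltrgtP (c%:~R : R) 0) => [c_lt0 | c_gt0 | /eqP]; last by rewrite intr_eq0 (negPf c_nz).
  have := ltr_int_addr1 (n := 0) c_lt0; nra.
have := ltr_int_addr1 (m := 0) c_gt0; nra.
Qed.

Lemma fine_adjoint_pyr_proj s (y : vec R d) t : 0 < s ->
  fine_adjoint (conv (pyr_vertices V)) s (ext_vec y t) ->
  2 * s <= 1 /\ fine_adjoint (conv V) (s / (1 - s)) (fun i => y i / t).
Proof.
move=> s_gt0 x_adj.
have height (c : int) : c != 0 -> Num.min 0 c%:~R + s <= c%:~R * t.
  move=> c_nz; have : exists i, @ext_ivec d (fun=> 0) c i != 0.
    by exists ord_max; rewrite ext_ivec_max.
  by move/x_adj; rewrite hP_pyr // hP0 // pairing_ext pairing0l !add0r.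
have s_le_t : s <= t by have := height 1 isT; rewrite min_l ?ler0z // add0r mul1r.
have t_le : t <= 1 - s.
  by have := height (-1) isT; rewrite min_r ?lerz0 // rmorphN /= mulN1r; lra.
split => [|b b_nz]; first lra.
have [h hE] := hP_int V_gt0 b.
have : exists i, ext_ivec b (- h) i != 0.
  by case: b_nz => i b_i; exists (lift ord_max i); rewrite ext_ivec_lift.
move/x_adj; rewrite hP_pyr // hE rmorphN /= subrr min_l // add0r pairing_ext.
have -> : pairing b (fun i => y i / t) = t^-1 * pairing b y.
  by rewrite -pairingZ; congr pairing; apply/funext => i; rewrite mulrC.
set p := pairing b y => p_ge.
have t_gt0 : 0 < t by lra.
have t_ratio : s / (1 - s) <= s / t.
  by rewrite ler_pM2l // lef_pV2 ?posrE //; lra.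
have -> : t^-1 * p = h%:~R + s / t + t^-1 * (p - h%:~R * t - s).
  by field; rewrite gt_eqF.
rewrite -addrA lerD2l; apply: le_trans t_ratio _; rewrite lerDl.
apply: mulr_ge0; first by rewrite invr_ge0 ltW.
by rewrite rmorphN /= in p_ge; lra.
Qed.

End Adjoint.

Definition adjoint_levels d (V : seq (ivec d)) : set R :=
  [set s | 0 < s /\ fine_adjoint (conv V) s !=set0].

Lemma fine_codegreeE d (V : seq (ivec d)) :
  fine_codegree (conv V) = (sup (adjoint_levels V))^-1.
Proof. by []. Qed.

Lemma adjoint_levels_down d (V : seq (ivec d)) (q r : R) :
  adjoint_levels V r -> 0 < q -> q <= r -> adjoint_levels V q.
Proof.
move=> [r_gt0 [y y_adj]] q_gt0 le_qr; split => //; exists y => a a_nz.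
by apply: le_trans (y_adj a a_nz); rewrite lerD2l.
Qed.

Lemma adjoint_levels_pyr d (V : seq (ivec d)) s : (0 < size V)%N ->
  adjoint_levels (pyr_vertices V) s <->
  [/\ 0 < s, 2 * s <= 1 & adjoint_levels V (s / (1 - s))].
Proof.
move=> V_gt0; split.
  move=> [s_gt0 [x]]; rewrite -(ext_vecK x) => /fine_adjoint_pyr_proj[] // s_le y_adj.
  by split => //; split; [rewrite divr_gt0 //; lra | eexists; exact: y_adj].
by move=> [s_gt0 s_le [_ [y /fine_adjoint_pyr_lift y_adj]]]; split => //; eexists; exact: y_adj.
Qed.

Lemma adjoint_levels_dim0 (V : seq (ivec 0)) s : adjoint_levels V s <-> 0 < s.
Proof. by split=> [[] // | s_gt0]; split => //; exists (fun=> 0) => a [[]]. Qed.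

Lemma adjoint_levels_bounded d (V : seq (ivec d.+1)) : has_ubound (adjoint_levels V).
Proof.
pose b : ivec d.+1 := fun=> 1.
exists (- (hP (conv V) b + hP (conv V) (fun i => - b i)) / 2) => s [_ [y y_adj]].
have := y_adj b (ex_intro _ ord0 isT).
have := y_adj (fun i => - b i) (ex_intro _ ord0 isT).
by rewrite pairingNl; lra.
Qed.

Section FullDimensional.
Variables (d : nat) (V : seq (ivec d)).
Hypothesis V_full : full_dim R V.

Lemma full_dim_size_gt0 : (0 < size V)%N.
Proof.
have [w [w_sum1 _]] := V_full (fun=> 0).
rewrite lt0n; apply/negP => /eqP V0; move: w w_sum1; rewrite V0 => w.
by rewrite big_ord0 => /eqP; rewrite eq_sym oner_eq0.
Qed.

Lemma full_dim_pairing_nonconst (b : ivec d) : (exists i, b i != 0) ->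
  forall h : R, exists k : 'I_(size V), pairing b (vertex V k) != h.
Proof.
move=> [i b_i] h; apply/not_existsP => /= const.
have {}const (k : 'I_(size V)) : pairing b (vertex V k) = h.
  by apply/eqP/negbNE/negP; exact: const.
pose x : vec R d := fun j => if j == i then (h + 1) / (b i)%:~R else 0.
have [w [w_sum1 xE]] := V_full x.
have : pairing b x = h + 1.
  rewrite /pairing (bigD1 i) //= big1 => [|j /negbTE j_i]; last by rewrite /x j_i mulr0.
  by rewrite /x eqxx addr0 mulrC divfK // intr_eq0.
rewrite (pairing_combination b xE).
under eq_bigr => k _ do rewrite const.
by rewrite -mulr_suml w_sum1 mul1r; lra.
Qed.

Lemma adjoint_levels_barycenter : adjoint_levels V (size V)%:R^-1.
Proof.
have V_gt0 := full_dim_size_gt0; set n := size V.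
have n_gt0 : (0 : R) < n%:R by rewrite ltr0n.
split; first by rewrite invr_gt0.
exists (fun i => \sum_(k < n) n%:R^-1 * vertex V k i) => b b_nz.
rewrite (pairing_combination (V := V) (w := fun=> n%:R^-1) b) // -mulr_sumr.
have [k0 [-> k0_min]] := hP_conv_vertex V_gt0 b; set h := pairing b (vertex V k0) in k0_min *.
have [k1 k1_ne] := full_dim_pairing_nonconst b_nz h.
have k1_ge : h + 1 <= pairing b (vertex V k1).
  have : h < pairing b (vertex V k1) by rewrite lt_neqAle eq_sym k1_ne k0_min.
  by rewrite /h !pairing_vertex; exact: ltr_int_addr1.
have excess : 1 <= \sum_(k < n) (pairing b (vertex V k) - h).
  rewrite (bigD1 k1) //=; apply: le_trans (_ : pairing b (vertex V k1) - h <= _); first lra.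
  by rewrite lerDl sumr_ge0 // => k _; rewrite subr_ge0.
have -> : \sum_(k < n) pairing b (vertex V k) = \sum_(k < n) (pairing b (vertex V k) - h) + h * n%:R.
  by rewrite sumrB sumr_const card_ord mulr_natr subrK.
rewrite mulrDr [n%:R^-1 * (h * _)]mulrC -mulrA mulfV ?gt_eqF // mulr1 addrC lerD2r.
by rewrite -[X in X <= _]mulr1 ler_wpM2l // ltW // invr_gt0.
Qed.

End FullDimensional.

Lemma sup_adjoint_levels_gt0 d (V : seq (ivec d)) :
  has_sup (adjoint_levels V) -> 0 < sup (adjoint_levels V).
Proof.
move=> hs; have [[r r_in] _] := hs.
by apply: lt_le_trans (sup_upper_bound hs r_in); case: r_in.
Qed.

Lemma sup_adjoint_levels_pyr d (V : seq (ivec d)) : (0 < size V)%N ->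
  has_sup (adjoint_levels V) ->
  sup (adjoint_levels (pyr_vertices V)) =
  Num.min 2^-1 (sup (adjoint_levels V) / (1 + sup (adjoint_levels V))).
Proof.
move=> V_gt0 hs; have := sup_adjoint_levels_gt0 hs; set σ := sup _ => σ_gt0.
have ratio_le s : 0 < s < 1 -> (s <= σ / (1 + σ)) = (s / (1 - s) <= σ).
  case/andP=> s_gt0 s_lt1; rewrite ler_pdivlMr ?ler_pdivrMr ?subr_gt0 //; last lra.
  by apply/idP/idP => ?; nra.
have ratio_lt s : 0 < s < 1 -> (s < σ / (1 + σ)) = (s / (1 - s) < σ).
  case/andP=> s_gt0 s_lt1; rewrite ltr_pdivlMr ?ltr_pdivrMr ?subr_gt0 //; last lra.
  by apply/idP/idP => ?; nra.
apply: sup_sandwich.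
- by rewrite lt_min invr_gt0 ltr0n divr_gt0 //; lra.
- move=> s /andP[s_gt0]; rewrite lt_min => /andP[s_lt_half].
  rewrite ratio_lt; last by apply/andP; split; lra.
  case/(sup_gt hs.1) => r r_in lt_r.
  apply/adjoint_levels_pyr => //; split => //; first lra.
  by apply: adjoint_levels_down r_in _ (ltW lt_r); rewrite divr_gt0 //; lra.
- move=> s /adjoint_levels_pyr[] // s_gt0 s_le s_in.
  rewrite le_min ratio_le; last by apply/andP; split; lra.
  by rewrite (sup_upper_bound hs s_in) andbT; lra.
Qed.

(* In dimension 0 every level is admissible, and [sup] of a set without upper
   bound is the junk value 0; accordingly mu^F(P) = 0^-1 = 0. *)
Lemma sup_adjoint_levels_dim0 (V : seq (ivec 0)) : sup (adjoint_levels V) = 0.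
Proof.
apply: sup_out => -[_ [u u_ub]].
have : adjoint_levels V (u * u + 1) by apply/adjoint_levels_dim0; nra.
by move/u_ub; nra.
Qed.

Lemma sup_adjoint_levels_pyr_dim0 (V : seq (ivec 0)) : (0 < size V)%N ->
  sup (adjoint_levels (pyr_vertices V)) = 2^-1.
Proof.
move=> V_gt0; apply: sup_sandwich => [|s /andP[s_gt0 s_lt] | s /adjoint_levels_pyr[] // _ s_le _].
- by rewrite invr_gt0.
- apply/adjoint_levels_pyr => //; split => //; first lra.
  by apply/adjoint_levels_dim0; rewrite divr_gt0 //; lra.
- lra.
Qed.

Lemma invf_min_pos (a b : R) : 0 < a -> 0 < b -> (Num.min a b)^-1 = Num.max a^-1 b^-1.
Proof.
move=> a_gt0 b_gt0; case: (leP a b) => ab; first by rewrite max_l // lef_pV2 ?posrE.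
by rewrite max_r // ltW // ltf_pV2 ?posrE.
Qed.

End FinePyramid.

Arguments adjoint_levels {R d}.

Theorem mainTheorem5 (R : realType) (d : nat) (V : seq (ivec d)) :
  @full_dim R d V ->
  fine_codegree (@conv R d.+1 (pyr_vertices V)) =
  Num.max 2 (fine_codegree (@conv R d V) + 1).
Proof.
move=> V_full; have V_gt0 := full_dim_size_gt0 V_full.
rewrite !fine_codegreeE.
case: d V V_full V_gt0 => [|d] V V_full V_gt0.
  rewrite sup_adjoint_levels_pyr_dim0 // sup_adjoint_levels_dim0 invr0 add0r invrK.
  by rewrite max_l // ler1n.
have V_levels : has_sup (@adjoint_levels R _ V).
  split; last exact: adjoint_levels_bounded.
  by exists (size V)%:R^-1; exact: adjoint_levels_barycenter.
have σ_gt0 := sup_adjoint_levels_gt0 V_levels.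
rewrite sup_adjoint_levels_pyr // invf_min_pos ?invr_gt0 ?divr_gt0 ?addr_gt0 //.
by rewrite invrK invf_div mulrDl mul1r divff ?gt_eqF.
Qed.
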